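(* Let $A$ be a ring, $\mathfrak a$ a regular ideal of $A$, and $A\bowtie\mathfrak a:=\{(a,a+\alpha): a\in A,\ \alpha\in\mathfrak a\}\subseteq A\times A$ the amalgamated duplication of $A$ along $\mathfrak a$. Let $n\in\{1,2,3,4,5\}$. Then $A\bowtie\mathfrak a$ satisfies condition $(P_n)$ (resp. is a locally Prüfer ring) if and only if $A$ satisfies condition $(P_n)$ (resp. is a locally Prüfer ring) and $\mathfrak a=A$.
   Context: All rings are commutative with identity. An element is regular if it is not a zerodivisor; an ideal is regular if it contains a regular element. For a ring $R$: $(P_1)$ every finitely generated ideal is projective (semi-hereditary); $(P_2)$ $R_{\mathfrak p}$ is a valuation domain for every prime (equivalently maximal) ideal $\mathfrak p$ (weak global dimension at most 1); $(P_3)$ every finitely generated ideal is locally principal (arithmetical); $(P_4)$ for an indeterminate $T$, every $g\in R[T]$ satisfies $c(gh)=c(g)c(h)$ for all $h\in R[T]$, $c(\cdot)$ the content ideal (Gauss ring); $(P_5)$ every regular finitely generated ideal is invertible (Prüfer ring). $R$ is locally Prüfer if $R_{\mathfrak m}$ is a Prüfer ring for every maximal ideal $\mathfrak m$. *)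

From HB Require Import structures.
From mathcomp Require Import all_boot all_algebra generic_quotient.
From mathcomp Require Import boolp.
From mathcomp Require Import ring.

Set Implicit Arguments.
Unset Strict Implicit.
Unset Printing Implicit Defensive.

Import GRing.Theory.
Local Open Scope ring_scope.
Local Open Scope quotient_scope.

Record mulset (R : comNzRingType) := MulSet {
  ms_pred :> {pred R};
  ms1 : 1 \in ms_pred;
  msM : forall x y, x \in ms_pred -> y \in ms_pred -> x * y \in ms_pred;
  ms0 : 0 \notin ms_pred }.

Section Localization.
Variables (R : comNzRingType) (S : mulset R).

Definition frac := {x : R * R | x.2 \in S}.

Definition frac_rel (x y : frac) : bool :=
  `[< exists2 u, u \in S & u * ((val x).1 * (val y).2 - (val y).1 * (val x).2) = 0 >].

Lemma frac_rel_refl : reflexive frac_rel.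
Proof. by move=> x; apply/asboolP; exists 1; [exact: ms1|rewrite subrr mulr0]. Qed.

Lemma frac_rel_sym : symmetric frac_rel.
Proof.
suff H : forall x y, frac_rel x y -> frac_rel y x.
  by move=> x y; apply/idP/idP => /H.
move=> x y /asboolP [u uS hu]; apply/asboolP; exists u => //.
by rewrite -opprB mulrN hu oppr0.
Qed.

Lemma frac_rel_trans : transitive frac_rel.
Proof.
move=> y x z /asboolP [u uS hu] /asboolP [v vS hv]; apply/asboolP.
case: x y z hu hv => [[a s] /= sS] [[b t] /= tS] [[c w] /= wS] /= hu hv.
exists (u * v * t); first by rewrite !msM.
have -> : u * v * t * (a * w - c * s) =
  v * w * (u * (a * t - b * s)) + u * s * (v * (b * w - c * t)) by ring.
by rewrite hu hv !mulr0 addr0.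
Qed.

Canonical frac_equiv := EquivRel frac_rel frac_rel_refl frac_rel_sym frac_rel_trans.

Definition loc := {eq_quot frac_equiv}.
HB.instance Definition _ := Choice.on loc.
HB.instance Definition _ := Quotient.on loc.


Definition mkfrac (a s : R) (sS : s \in S) : frac := exist _ (a, s) sS.

Definition fadd (x y : frac) : frac :=
  mkfrac ((val x).1 * (val y).2 + (val y).1 * (val x).2)
         (msM (valP x) (valP y)).
Definition fmul (x y : frac) : frac :=
  mkfrac ((val x).1 * (val y).1) (msM (valP x) (valP y)).
Definition fopp (x : frac) : frac := mkfrac (- (val x).1) (valP x).
Definition fzero : frac := mkfrac 0 (ms1 S).
Definition fone : frac := mkfrac 1 (ms1 S).

Lemma fadd_compat x x' y y' : frac_rel x x' -> frac_rel y y' ->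
  frac_rel (fadd x y) (fadd x' y').
Proof.
case: x x' y y' => [[a s] sS] [[a' s'] s'S] [[b t] tS] [[b' t'] t'S].
move=> /asboolP [u uS hu] /asboolP [v vS hv]; apply/asboolP => /=.
exists (u * v); first exact: msM.
rewrite /= in hu hv.
have -> : u * v * ((a * t + b * s) * (s' * t') - (a' * t' + b' * s') * (s * t))
  = v * t * t' * (u * (a * s' - a' * s)) + u * s * s' * (v * (b * t' - b' * t))
  by ring.
by rewrite hu hv !mulr0 addr0.
Qed.

Lemma fmul_compat x x' y y' : frac_rel x x' -> frac_rel y y' ->
  frac_rel (fmul x y) (fmul x' y').
Proof.
case: x x' y y' => [[a s] sS] [[a' s'] s'S] [[b t] tS] [[b' t'] t'S].
move=> /asboolP [u uS hu] /asboolP [v vS hv]; apply/asboolP => /=.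
exists (u * v); first exact: msM.
rewrite /= in hu hv.
have -> : u * v * (a * b * (s' * t') - a' * b' * (s * t))
  = v * b * t' * (u * (a * s' - a' * s)) + u * a' * s * (v * (b * t' - b' * t))
  by ring.
by rewrite hu hv !mulr0 addr0.
Qed.

Lemma fopp_compat x x' : frac_rel x x' -> frac_rel (fopp x) (fopp x').
Proof.
case: x x' => [[a s] sS] [[a' s'] s'S] /asboolP [u uS hu]; apply/asboolP.
exists u => //=; rewrite /= in hu.
have -> : u * (- a * s' - - a' * s) = - (u * (a * s' - a' * s)) by ring.
by rewrite hu oppr0.
Qed.

Definition lzero : loc := \pi_loc fzero.
Definition lone : loc := \pi_loc fone.
Definition ladd (x y : loc) : loc := \pi_loc (fadd (repr x) (repr y)).
Definition lmul (x y : loc) : loc := \pi_loc (fmul (repr x) (repr y)).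
Definition lopp (x : loc) : loc := \pi_loc (fopp (repr x)).

Lemma repr_rel (x : frac) : frac_rel (repr (\pi_loc x)) x.
Proof. by apply/eqmodP; rewrite reprK. Qed.

Lemma laddE x y : ladd (\pi_loc x) (\pi_loc y) = \pi_loc (fadd x y).
Proof. by apply/eqmodP/fadd_compat; apply: repr_rel. Qed.
Lemma lmulE x y : lmul (\pi_loc x) (\pi_loc y) = \pi_loc (fmul x y).
Proof. by apply/eqmodP/fmul_compat; apply: repr_rel. Qed.
Lemma loppE x : lopp (\pi_loc x) = \pi_loc (fopp x).
Proof. by apply/eqmodP/fopp_compat; apply: repr_rel. Qed.

Lemma pi_eq (x y : frac) :
  (val x).1 * (val y).2 = (val y).1 * (val x).2 -> \pi_loc x = \pi_loc y.
Proof.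
move=> h; apply/eqmodP/asboolP; exists 1; first exact: ms1.
by rewrite h subrr mulr0.
Qed.

Lemma laddA : associative ladd.
Proof.
elim/quotW=> x; elim/quotW=> y; elim/quotW=> z.
rewrite (laddE y z) (laddE x (fadd y z)) (laddE x y) (laddE (fadd x y) z).
by apply: pi_eq; case: x y z => [[a s] ?] [[b t] ?] [[c w] ?] /=; ring.
Qed.

Lemma laddC : commutative ladd.
Proof.
elim/quotW=> x; elim/quotW=> y; rewrite (laddE x y) (laddE y x).
by apply: pi_eq; case: x y => [[a s] ?] [[b t] ?] /=; ring.
Qed.

Lemma ladd0 : left_id lzero ladd.
Proof.
elim/quotW=> x; rewrite /lzero (laddE fzero x).
by apply: pi_eq; case: x => [[a s] ?] /=; ring.
Qed.

Lemma laddN : left_inverse lzero lopp ladd.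
Proof.
elim/quotW=> x; rewrite /lzero (loppE x) (laddE (fopp x) x).
by apply: pi_eq; case: x => [[a s] ?] /=; ring.
Qed.

HB.instance Definition _ := GRing.isZmodule.Build loc laddA laddC ladd0 laddN.

Lemma lmulA : associative lmul.
Proof.
elim/quotW=> x; elim/quotW=> y; elim/quotW=> z.
rewrite (lmulE y z) (lmulE x (fmul y z)) (lmulE x y) (lmulE (fmul x y) z).
by apply: pi_eq; case: x y z => [[a s] ?] [[b t] ?] [[c w] ?] /=; ring.
Qed.

Lemma lmulC : commutative lmul.
Proof.
elim/quotW=> x; elim/quotW=> y; rewrite (lmulE x y) (lmulE y x).
by apply: pi_eq; case: x y => [[a s] ?] [[b t] ?] /=; ring.
Qed.

Lemma lmul1 : left_id lone lmul.
Proof.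
elim/quotW=> x; rewrite /lone (lmulE fone x).
by apply: pi_eq; case: x => [[a s] ?] /=; ring.
Qed.

Lemma lmulDl : left_distributive lmul ladd.
Proof.
elim/quotW=> x; elim/quotW=> y; elim/quotW=> z.
rewrite (laddE x y) (lmulE (fadd x y) z) (lmulE x z) (lmulE y z).
rewrite (laddE (fmul x z) (fmul y z)).
apply/eqmodP/asboolP; exists 1; first exact: ms1.
by case: x y z => [[a s] ?] [[b t] ?] [[c w] ?] /=; ring.
Qed.

Lemma lone_neq0 : lone != lzero.
Proof.
apply/negP => /eqP /eqmodP /asboolP [u uS] /=.
rewrite mulr1 mul0r subr0 mulr1 => u0.
by move: uS; rewrite u0 (negbTE (ms0 S)).
Qed.

HB.instance Definition _ :=
  GRing.Zmodule_isComNzRing.Build loc lmulA lmulC lmul1 lmulDl lone_neq0.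

Definition locmap (r : R) : loc := \pi_loc (mkfrac r (ms1 S)).

End Localization.

Section Ideals.
Variable R : comNzRingType.

Definition is_ideal (I : R -> Prop) : Prop :=
  [/\ I 0, (forall x y, I x -> I y -> I (x + y)) & (forall r x, I x -> I (r * x))].

Definition regular (x : R) : Prop := forall y, x * y = 0 -> y = 0.

Definition regular_ideal (I : R -> Prop) : Prop := exists2 x, I x & regular x.

Definition is_prime_ideal (p : R -> Prop) : Prop :=
  [/\ is_ideal p, ~ p 1 & forall x y, p (x * y) -> p x \/ p y].

Definition is_maximal_ideal (m : R -> Prop) : Prop :=
  [/\ is_ideal m, ~ m 1 &
     forall J, is_ideal J -> (forall x, m x -> J x) -> (forall x, J x -> m x) \/ J 1].

Definition ideal_gen (s : seq R) : R -> Prop :=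
  fun z => exists f : nat -> R, z = \sum_(i < size s) f i * s`_i.

Lemma maximal_prime m : is_maximal_ideal m -> is_prime_ideal m.
Proof.
case=> [[m0 mD mM] m1 mmax]; split=> // x y mxy.
case: (pselect (m x)) => mx; [by left|right].
pose J z := exists a r, m a /\ z = a + r * x.
have JI : is_ideal J.
  split.
  - by exists 0, 0; rewrite mul0r addr0.
  - move=> _ _ [a [r [ma ->]]] [b [t [mb ->]]]; exists (a + b), (r + t).
    by split; [exact: mD|ring].
  - move=> c _ [a [r [ma ->]]]; exists (c * a), (c * r).
    by split; [exact: mM|ring].
have mJ : forall z, m z -> J z by move=> z mz; exists z, 0; rewrite mul0r addr0.
case: (mmax J JI mJ) => [Jm | [a [r [ma e]]]].
  by exfalso; apply: mx; apply: Jm; exists 0, 1; rewrite add0r mul1r.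
have -> : y = a * y + r * (x * y) by rewrite mulrA -mulrDl -e mul1r.
by apply: mD; [rewrite mulrC; exact: mM|exact: mM].
Qed.

Definition compl_pred (p : R -> Prop) : {pred R} := fun x => ~~ `[< p x >].

Lemma prime_ms1 p : is_prime_ideal p -> 1 \in compl_pred p.
Proof. by case=> _ p1 _; apply/negP => /asboolP. Qed.

Lemma prime_msM p : is_prime_ideal p ->
  forall x y, x \in compl_pred p -> y \in compl_pred p -> x * y \in compl_pred p.
Proof.
case=> _ _ pM x y /negP px /negP py; apply/negP => /asboolP /pM [] h.
- by apply: px; apply/asboolP.
- by apply: py; apply/asboolP.
Qed.

Lemma prime_ms0 p : is_prime_ideal p -> 0 \notin compl_pred p.
Proof. by case=> [[p0 _ _] _ _]; rewrite negbK; apply/asboolP. Qed.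

Definition prime_mulset p (Hp : is_prime_ideal p) : mulset R :=
  MulSet (prime_ms1 Hp) (prime_msM Hp) (prime_ms0 Hp).

Definition max_mulset m (Hm : is_maximal_ideal m) : mulset R :=
  prime_mulset (maximal_prime Hm).

Definition regular_pred : {pred R} := fun x => `[< regular x >].

Lemma regular_ms1 : 1 \in regular_pred.
Proof. by apply/asboolP => y; rewrite mul1r. Qed.

Lemma regular_msM x y : x \in regular_pred -> y \in regular_pred ->
  x * y \in regular_pred.
Proof.
move=> /asboolP rx /asboolP ry; apply/asboolP => z; rewrite -mulrA.
by move/rx/ry.
Qed.

Lemma regular_ms0 : 0 \notin regular_pred.
Proof.
by apply/negP => /asboolP /(_ 1); rewrite mul0r => /(_ erefl) /eqP; rewrite oner_eq0.
Qed.

Definition regular_mulset : mulset R := MulSet regular_ms1 regular_msM regular_ms0.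

End Ideals.

Definition total_quot (R : comNzRingType) := loc (regular_mulset R).

Record ideal (R : comNzRingType) := Ideal {
  ideal_mem :> R -> Prop;
  ideal_is_ideal : is_ideal ideal_mem }.

Section Duplication.
Variables (A : comNzRingType) (a : ideal A).

Definition dup_pred : {pred A * A} := fun x => `[< a (x.2 - x.1) >].

Lemma dup_subring_closed : GRing.subring_closed dup_pred.
Proof.
have [I0 ID IM] := ideal_is_ideal a.
split.
- by rewrite unfold_in; apply/asboolP; rewrite /= subrr.
- move=> [x1 x2] [y1 y2]; rewrite !unfold_in => /asboolP /= hx /asboolP /= hy.
  apply/asboolP => /=.
  have -> : x2 - y2 - (x1 - y1) = (x2 - x1) + (-1) * (y2 - y1) by ring.
  by apply: ID => //; exact: IM.
- move=> [x1 x2] [y1 y2]; rewrite !unfold_in => /asboolP /= hx /asboolP /= hy.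
  apply/asboolP => /=.
  have -> : x2 * y2 - x1 * y1 = x2 * (y2 - y1) + y1 * (x2 - x1) by ring.
  by apply: ID; exact: IM.
Qed.

HB.instance Definition _ := GRing.isSubringClosed.Build (A * A)%type dup_pred
  dup_subring_closed.

Record dup := Dup { dup_val : A * A; dup_valP : dup_val \in dup_pred }.

HB.instance Definition _ := [isSub for dup_val].
HB.instance Definition _ := [Choice of dup by <:].
HB.instance Definition _ := [SubChoice_isSubComNzRing of dup by <:].

End Duplication.

Section Conditions.
Variable R : comNzRingType.

Definition linear_on (N : lmodType R) (I : R -> Prop) (f : R -> N) : Prop :=
  (forall x y, I x -> I y -> f (x + y) = f x + f y) /\
  (forall r x, I x -> f (r * x) = r *: f x).

Definition projective_ideal (I : R -> Prop) : Prop :=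
  forall (M N : lmodType R) (g : {linear M -> N}),
    (forall n, exists m, g m = n) ->
    forall h : R -> N, linear_on I h ->
    exists k : R -> M, linear_on I k /\ forall x, I x -> g (k x) = h x.
End Conditions.

(* a ring D is a valuation domain: an integral domain (D is nonzero, being a
   comNzRingType) whose principal ideals are totally ordered by divisibility *)
Definition valuation_domain (D : comNzRingType) : Prop :=
  (forall x y : D, x * y = 0 -> x = 0 \/ y = 0) /\
  (forall x y : D, (exists c, y = c * x) \/ (exists c, x = c * y)).

Definition content (R : comNzRingType) (g : {poly R}) : R -> Prop :=
  ideal_gen (polyseq g).

Definition ideal_gen_mul (R : comNzRingType) (s t : seq R) : R -> Prop :=
  ideal_gen [seq x * y | x <- s, y <- t].

Section Prufer.
Variable R : comNzRingType.
Local Notation Q := (total_quot R).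
Local Notation iota := (@locmap R (regular_mulset R)).

Definition submod_mul (X Y : Q -> Prop) : Q -> Prop :=
  fun z => exists n (f g : nat -> Q),
    [/\ forall k, X (f k), forall k, Y (g k) & z = \sum_(k < n) f k * g k].

Definition fractional_ideal (J : Q -> Prop) : Prop :=
  [/\ J 0, (forall x y, J x -> J y -> J (x + y)),
      (forall r x, J x -> J (iota r * x)) &
      exists2 d, regular d & forall q, J q -> exists r, iota d * q = iota r].

(* I is invertible: I J = R for some fractional ideal J *)
Definition invertible_ideal (I : R -> Prop) : Prop :=
  exists2 J, fractional_ideal J &
    forall z, submod_mul (fun q => exists2 x, I x & q = iota x) J z <->
              exists r, z = iota r.
End Prufer.

Section Conds.
Variable R : comNzRingType.

Definition P1 : Prop := forall s : seq R, projective_ideal (ideal_gen s).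

Definition P2 : Prop :=
  forall (p : R -> Prop) (Hp : is_prime_ideal p), valuation_domain (loc (prime_mulset Hp)).

Definition P3 : Prop :=
  forall (s : seq R) (m : R -> Prop) (Hm : is_maximal_ideal m),
    exists g : loc (max_mulset Hm),
      forall z, ideal_gen (map (locmap (max_mulset Hm)) s) z <-> exists c, z = c * g.

Definition P4 : Prop :=
  forall g h : {poly R}, forall z,
    content (g * h) z <-> ideal_gen_mul (polyseq g) (polyseq h) z.

Definition P5 : Prop :=
  forall s : seq R, regular_ideal (ideal_gen s) -> invertible_ideal (ideal_gen s).

End Conds.

Definition locally_prufer (R : comNzRingType) : Prop :=
  forall (m : R -> Prop) (Hm : is_maximal_ideal m), P5 (loc (max_mulset Hm)).

Definition Pcond (n : nat) (R : comNzRingType) : Prop :=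
  match n with
  | 1 => P1 R | 2 => P2 R | 3 => P3 R | 4 => P4 R | 5 => P5 R
  | _ => True
  end.

(* Fix a regular element r of a.  In the duplication D = A ⋈ a the elements
   X = (r, 0) and Y = (0, r) satisfy X Y = 0 while X + Y = (r, r) is regular.
   Each of (P1), (P4) and (P5) yields d in D with d X^2 = X^2 and d Y^2 = 0:
   from a dual basis of the ideal (X, Y), from Gauss's identity
   c(G H) = c(G) c(H) for G = X + Y T and H = Y + X T, or from the inverse of
   the regular ideal (X, Y).  Comparing components gives d = (1, 0), hence
   -1 = 0 - 1 lies in a.  For (P2), (P3) and local Prüferness the same kind of
   d is found in the localization of D at M ⋈ a, for a maximal ideal M
   containing a, and comparing components (r^2 being regular and denominators
   avoiding M) forces a denominator into M; so no maximal ideal contains a.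
   Conversely, when a = A the ring D is A × A: every prime of D is the inverse
   image of a prime of A under one of the two projections, with isomorphic
   localizations, and each property passes from A to A × A componentwise.  In
   the other direction A is a retract of D through the diagonal map and the
   first projection. *)
From HB Require Import structures.
From mathcomp Require Import all_boot all_algebra generic_quotient boolp ring.
From mathcomp Require classical_sets.

Set Implicit Arguments.
Unset Strict Implicit.
Unset Printing Implicit Defensive.

Import GRing.Theory.
Local Open Scope ring_scope.
Local Open Scope quotient_scope.

Section IdealTheory.
Variable R : comNzRingType.
Implicit Types (J : R -> Prop) (s : seq R) (x y z : R).

Lemma ideal_sum J n (F : nat -> R) : is_ideal J ->
  (forall i, (i < n)%N -> J (F i)) -> J (\sum_(i < n) F i).
Proof. by case=> J0 JD _ HF; apply: (big_ind J) => // i _; apply: HF. Qed.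

Lemma idealN J x : is_ideal J -> J x -> J (- x).
Proof. by case=> _ _ JM Jx; rewrite -mulN1r; apply: JM. Qed.

Lemma idealB J x y : is_ideal J -> J x -> J y -> J (x - y).
Proof. by move=> HJ Jx Jy; case: (HJ) => _ JD _; apply: JD => //; apply: idealN. Qed.

Lemma idealMr J x r : is_ideal J -> J x -> J (x * r).
Proof. by case=> _ _ JM Jx; rewrite mulrC; apply: JM. Qed.

Lemma ideal1_all J : is_ideal J -> J 1 -> forall x, J x.
Proof. by case=> _ _ JM J1 x; rewrite -(mulr1 x); apply: JM. Qed.

Lemma ideal_gen_ideal s : is_ideal (ideal_gen s).
Proof.
split.
- by exists (fun _ => 0); rewrite big1 // => i _; rewrite mul0r.
- move=> _ _ [f ->] [g ->]; exists (fun i => f i + g i).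
  by rewrite -big_split /=; apply: eq_bigr => i _; rewrite mulrDl.
- move=> r _ [f ->]; exists (fun i => r * f i).
  by rewrite mulr_sumr; apply: eq_bigr => i _; rewrite mulrA.
Qed.

Lemma ideal_gen_nth s i : (i < size s)%N -> ideal_gen s s`_i.
Proof.
move=> hi; exists (fun j => if j == i then 1 else 0).
rewrite (bigD1 (Ordinal hi)) //= eqxx mul1r big1 ?addr0 //.
by move=> j; rewrite -val_eqE /= => /negbTE ->; rewrite mul0r.
Qed.

Lemma ideal_gen_mem s x : x \in s -> ideal_gen s x.
Proof. by move=> xs; rewrite -(nth_index (0 : R) xs); apply: ideal_gen_nth; rewrite index_mem. Qed.

Lemma ideal_gen_min s J : is_ideal J ->
  (forall i, (i < size s)%N -> J s`_i) -> forall z, ideal_gen s z -> J z.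
Proof.
move=> HJ Hs _ [f ->]; apply: (ideal_sum (F := fun i => f i * s`_i)) => // i hi.
by case: HJ => _ _ JM; apply/JM/Hs.
Qed.

Lemma ideal_gen2P x y z : ideal_gen [:: x; y] z <-> exists u v, z = u * x + v * y.
Proof.
split.
- by case=> f ->; exists (f 0%N), (f 1%N); rewrite !big_ord_recl big_ord0 addr0.
- case=> u [v ->]; exists (fun i => if i == 0%N then u else v).
  by rewrite !big_ord_recl big_ord0 addr0.
Qed.

End IdealTheory.

Lemma ideal_gen_map (R S : comNzRingType) (f : {rmorphism R -> S}) (s : seq R) z :
  ideal_gen s z -> ideal_gen (map f s) (f z).
Proof.
case=> c ->; exists (fun i => f (c i)); rewrite rmorph_sum size_map.
by apply: eq_bigr => i _; rewrite rmorphM (nth_map 0).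
Qed.

Section Preimage.
Variables (R S : comNzRingType) (f : {rmorphism R -> S}).

Lemma preim_ideal (J : S -> Prop) : is_ideal J -> is_ideal (fun x => J (f x)).
Proof.
case=> J0 JD JM; split.
- by rewrite rmorph0.
- by move=> x y hx hy; rewrite rmorphD; apply: JD.
- by move=> r x hx; rewrite rmorphM; apply: JM.
Qed.

Lemma preim_prime (P : S -> Prop) : is_prime_ideal P -> is_prime_ideal (fun x => P (f x)).
Proof.
case=> HP P1 PM; split; first exact: preim_ideal.
- by rewrite rmorph1.
- by move=> x y; rewrite rmorphM; apply: PM.
Qed.

End Preimage.

Lemma prime_ideal_mulr (R : comNzRingType) (P : R -> Prop) x y :
  is_prime_ideal P -> P (x * y) -> ~ P x -> P y.
Proof. by case=> _ _ PM /PM [] // ? /(_ _). Qed.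

Lemma prime_mulsetP (R : comNzRingType) (P : R -> Prop) (HP : is_prime_ideal P) s :
  s \in prime_mulset HP <-> ~ P s.
Proof.
rewrite /= /compl_pred unfold_in; split.
  by move/negP => h Ps; apply/h/asboolP.
by move=> h; apply/negP => /asboolP.
Qed.

(* Zorn's lemma is applied to the proper ideals containing [a], together with
   the empty set so that the union of the empty chain is admissible. *)
Lemma exists_maximal_ideal (R : comNzRingType) (a : R -> Prop) :
  is_ideal a -> ~ a 1 -> exists M, is_maximal_ideal M /\ forall x, a x -> M x.
Proof.
move=> Ha na1.
pose P (X : R -> Prop) := [/\ ~ X 1, (forall x y, X x -> X y -> X (x + y)),
   (forall r x, X x -> X (r * x)) & ((forall x, a x -> X x) \/ (forall x, ~ X x))].
have [M [[M1 MD MM Ma] Mmax]] : exists M, P M /\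
    (forall B, classical_sets.proper M B -> ~ P B).
  apply: classical_sets.Zorn_bigcup => F FP Ftot; split.
  - by case=> X FX X1; case: (FP X FX) => /(_ X1).
  - move=> x y [X FX Xx] [Y FY Yy].
    case: (Ftot X Y FX FY) => [XY|YX].
      by exists Y => //; case: (FP Y FY) => _ YD _ _; apply: YD => //; apply: XY.
    by exists X => //; case: (FP X FX) => _ XD _ _; apply: XD => //; apply: YX.
  - move=> r x [X FX Xx]; exists X => //.
    by case: (FP X FX) => _ _ XM _; apply: XM.
  - case: (pselect (exists2 X, F X & forall x, a x -> X x)) => [[X FX Xa]|nX].
      by left => x ax; exists X => //; apply: Xa.
    right => x [X FX Xx]; case: (FP X FX) => _ _ _ [Xa|/(_ x)//].
    by apply: nX; exists X.
have aM : forall x, a x -> M x.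
  case: Ma => // M0; exfalso; apply: (Mmax a); last first.
    by case: Ha => a0 aD aM; split => //; left.
  split; first by move=> t /M0.
  by move/(_ 0); case: Ha => a0 _ _ /(_ a0) /M0.
have M0 : M 0 by apply: aM; case: Ha.
exists M; split => //; split => //.
move=> J [J0 JD JM] MJ.
case: (pselect (J 1)) => [J1|nJ1]; [by right|left].
move=> x Jx; apply: contrapT => nMx.
apply: (Mmax J); last by split => //; left => y /aM /MJ.
by split => // /(_ x Jx).
Qed.

Lemma full_of_no_maximal_above (R : comNzRingType) (a : R -> Prop) : is_ideal a ->
  (forall M, is_maximal_ideal M -> (forall x, a x -> M x) -> False) ->
  forall x, a x.
Proof.
move=> Ha noM; case: (pselect (a 1)) => [a1|na1]; first exact: ideal1_all.
by have [M [HM aM]] := exists_maximal_ideal Ha na1; case: (noM M HM aM).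
Qed.

Section Regular.
Variable R : comNzRingType.
Implicit Types x y : R.

Lemma regular_mulsetP x : x \in regular_mulset R <-> regular x.
Proof. by split=> [/asboolP|h]; last apply/asboolP. Qed.

Lemma regular_mull0 x y : regular x -> y * x = 0 -> y = 0.
Proof. by move=> hx; rewrite mulrC; apply: hx. Qed.

Lemma regularM x y : regular x -> regular y -> regular (x * y).
Proof. by move=> hx hy z; rewrite -mulrA => /hx /hy. Qed.

End Regular.

Section LocalizationTheory.
Variables (R : comNzRingType) (S : mulset R).
Local Notation L := (loc S).

Lemma loc_piD (x y : frac S) : \pi_L x + \pi_L y = \pi_L (fadd x y).
Proof. exact: laddE. Qed.
Lemma loc_piM (x y : frac S) : \pi_L x * \pi_L y = \pi_L (fmul x y).
Proof. exact: lmulE. Qed.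
Lemma loc_piN (x : frac S) : - \pi_L x = \pi_L (fopp x).
Proof. exact: loppE. Qed.

Lemma loc_pi_surj (q : L) : exists x : frac S, q = \pi_L x.
Proof. by elim/quotW: q => x; exists x. Qed.

Lemma loc_pi_eqP (x y : frac S) : \pi_L x = \pi_L y <->
  exists2 u, u \in S & u * ((val x).1 * (val y).2 - (val y).1 * (val x).2) = 0.
Proof. by split=> [/eqmodP/asboolP|h]; last apply/eqmodP/asboolP. Qed.

Lemma loc_pi_eq0P (x : frac S) : \pi_L x = 0 <-> exists2 u, u \in S & u * (val x).1 = 0.
Proof.
have -> : 0 = \pi_L (fzero S) by [].
by rewrite loc_pi_eqP /= mulr1 mul0r subr0.
Qed.

Lemma locmap_is_zmod_morphism : zmod_morphism (locmap S).
Proof. by move=> x y; rewrite /locmap loc_piN loc_piD; apply: pi_eq => /=; ring. Qed.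

Lemma locmap_is_monoid_morphism : monoid_morphism (locmap S).
Proof.
split=> // x y; rewrite /locmap loc_piM.
by apply: pi_eq => /=; ring.
Qed.

HB.instance Definition _ := GRing.isZmodMorphism.Build _ _ (locmap S)
  locmap_is_zmod_morphism.
HB.instance Definition _ := GRing.isMonoidMorphism.Build _ _ (locmap S)
  locmap_is_monoid_morphism.

Lemma regular_locmap t : regular t -> regular (locmap S t).
Proof.
move=> ht q; have [x ->] := loc_pi_surj q.
rewrite /locmap loc_piM => /loc_pi_eq0P [u uS /= hu]; apply/loc_pi_eq0P; exists u => //.
by apply: (regular_mull0 ht); rewrite -[RHS]hu; ring.
Qed.

End LocalizationTheory.

Section LocalizationFunctor.
Variables (R S : comNzRingType) (SR : mulset R) (SS : mulset S).
Variables (f : {rmorphism R -> S}).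
Hypothesis fS : forall s, s \in SR -> f s \in SS.

Definition frac_map (x : frac SR) : frac SS :=
  @mkfrac _ SS (f (val x).1) (f (val x).2) (fS (valP x)).

Lemma frac_map_rel x y : frac_rel x y -> frac_rel (frac_map x) (frac_map y).
Proof.
move=> /asboolP [u uS hu]; apply/asboolP; exists (f u); first exact: fS.
by rewrite /= -!rmorphM -rmorphB -rmorphM hu rmorph0.
Qed.

Definition locF (q : loc SR) : loc SS := \pi_(loc SS) (frac_map (repr q)).

Lemma locF_pi x : locF (\pi_(loc SR) x) = \pi_(loc SS) (frac_map x).
Proof. by apply/eqmodP/frac_map_rel/repr_rel. Qed.

Lemma locF_is_zmod_morphism : zmod_morphism locF.
Proof.
move=> p q; have [x ->] := loc_pi_surj p; have [y ->] := loc_pi_surj q.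
rewrite loc_piN loc_piD !locF_pi loc_piN loc_piD; apply: pi_eq => /=.
by rewrite !(rmorphD, rmorphM, rmorphN).
Qed.

Lemma locF_is_monoid_morphism : monoid_morphism locF.
Proof.
split.
  have -> : 1 = \pi_(loc SR) (fone SR) by [].
  by rewrite locF_pi; apply: pi_eq => /=; rewrite rmorph1.
move=> p q; have [x ->] := loc_pi_surj p; have [y ->] := loc_pi_surj q.
by rewrite loc_piM !locF_pi loc_piM; apply: pi_eq => /=; rewrite !rmorphM.
Qed.

HB.instance Definition _ := GRing.isZmodMorphism.Build _ _ locF locF_is_zmod_morphism.
HB.instance Definition _ := GRing.isMonoidMorphism.Build _ _ locF locF_is_monoid_morphism.

Lemma locF_locmap r : locF (locmap SR r) = locmap SS (f r).
Proof. by rewrite /locmap locF_pi; apply: pi_eq => /=; rewrite rmorph1. Qed.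

End LocalizationFunctor.

Definition principal (T : comNzRingType) (I : T -> Prop) :=
  exists g, forall z, I z <-> exists c, z = c * g.

Section Retract.
Variables (R S : comNzRingType) (f : {rmorphism R -> S}) (g : {rmorphism S -> R}).
Hypothesis fK : cancel f g.

Lemma valuation_domain_retract : valuation_domain S -> valuation_domain R.
Proof.
move=> [dom div]; split.
- move=> x y e; have : f x * f y = 0 by rewrite -rmorphM e rmorph0.
  by case/dom => h; [left|right]; rewrite -[LHS]fK h rmorph0.
- move=> x y; case: (div (f x) (f y)) => [[c e]|[c e]]; [left|right]; exists (g c).
  + by rewrite -[y]fK e rmorphM fK.
  + by rewrite -[x]fK e rmorphM fK.
Qed.

Lemma principal_retract (t : seq R) :
  principal (ideal_gen (map f t)) -> principal (ideal_gen t).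
Proof.
move=> [g0 hg]; exists (g g0) => z; split.
- by move/(ideal_gen_map f)/hg => [c e]; exists (g c); rewrite -[z]fK e rmorphM.
- case=> c ->; case: (ideal_gen_ideal t) => _ _ IM; apply: IM.
  have : ideal_gen (map g (map f t)) (g g0).
    by apply: ideal_gen_map; apply/hg; exists 1; rewrite mul1r.
  by rewrite mapK.
Qed.

Hypothesis gK : cancel g f.

Lemma rmorph_iso_regular x : regular x -> regular (f x).
Proof.
move=> rx y e; have gy0 : g y = 0 by apply: rx; rewrite -[x]fK -rmorphM e rmorph0.
by rewrite -[y]gK gy0 rmorph0.
Qed.

End Retract.

Definition qideal (R : comNzRingType) (I : R -> Prop) : total_quot R -> Prop :=
  fun q => exists2 x, I x & q = locmap (regular_mulset R) x.

Section SubmoduleProduct.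
Variable R : comNzRingType.
Local Notation Q := (total_quot R).
Implicit Types X Y : Q -> Prop.

Lemma submod_mulD X Y z w :
  submod_mul X Y z -> submod_mul X Y w -> submod_mul X Y (z + w).
Proof.
move=> [n [u [v [Xu Yv ->]]]] [m [u' [v' [Xu' Yv' ->]]]].
pose cat (F G : nat -> Q) k := if (k < n)%N then F k else G (k - n)%N.
exists (n + m)%N, (cat u u'), (cat v v'); split.
- by move=> k; rewrite /cat; case: ifP.
- by move=> k; rewrite /cat; case: ifP.
rewrite big_split_ord /=; congr (_ + _); apply: eq_bigr => k _.
  by rewrite /cat /= ltn_ord.
by rewrite /cat /= ltnNge leq_addr /= addKn.
Qed.

Lemma submod_mul_scale X Y c z : (forall q, X q -> X (c * q)) ->
  submod_mul X Y z -> submod_mul X Y (c * z).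
Proof.
move=> Xc [n [u [v [Xu Yv ->]]]]; exists n, (fun k => c * u k), v.
split=> // [k|]; first exact: Xc.
by rewrite mulr_sumr; apply: eq_bigr => k _; rewrite mulrA.
Qed.

End SubmoduleProduct.

Section SubmoduleProductMap.
Variables (R S : comNzRingType).
Implicit Types (X Y : total_quot R -> Prop).

Lemma submod_mul_map (f : total_quot R -> total_quot S) X Y
    (X' Y' : total_quot S -> Prop) z :
  {morph f : x y / x + y} -> {morph f : x y / x * y} -> f 0 = 0 ->
  (forall q, X q -> X' (f q)) -> (forall q, Y q -> Y' (f q)) ->
  submod_mul X Y z -> submod_mul X' Y' (f z).
Proof.
move=> fD fM f0 hX hY [n [u [v [Xu Yv ->]]]].
exists n, (f \o u), (f \o v); split=> [k|k|]; [exact: hX|exact: hY|].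
by rewrite (big_morph f fD f0); apply: eq_bigr => k _; apply: fM.
Qed.

Lemma submod_mul_lift (f : {rmorphism total_quot R -> total_quot S}) X Y
    (X' Y' : total_quot S -> Prop) z :
  (forall q, X' q -> exists2 p, X p & q = f p) ->
  (forall q, Y' q -> exists2 p, Y p & q = f p) ->
  submod_mul X' Y' z -> exists2 w, submod_mul X Y w & z = f w.
Proof.
move=> hX hY [n [u [v [Xu Yv ->]]]].
have /choice [u' hu'] : forall k, exists p, X p /\ u k = f p.
  by move=> k; have [p ? ?] := hX _ (Xu k); exists p.
have /choice [v' hv'] : forall k, exists p, Y p /\ v k = f p.
  by move=> k; have [p ? ?] := hY _ (Yv k); exists p.
exists (\sum_(k < n) u' k * v' k).
  by exists n, u', v'; split=> // k; [case: (hu' k)|case: (hv' k)].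
rewrite rmorph_sum; apply: eq_bigr => k _; rewrite rmorphM.
by case: (hu' k) => _ <-; case: (hv' k) => _ <-.
Qed.

End SubmoduleProductMap.

(* [e = x / (x + y)] maps the ideal [(x, y)] into itself since [x y = 0], so
   [e = e * 1] lies in [(x, y) (x, y)^-1 = R]. *)
Lemma P5_orthogonal_dvd (R : comNzRingType) (x y : R) : P5 R ->
  x * y = 0 -> regular (x + y) -> exists d, d * (x + y) = x.
Proof.
move=> HP hxy hw.
have hI : regular_ideal (ideal_gen [:: x; y]).
  by exists (x + y) => //; apply/ideal_gen2P; exists 1, 1; rewrite !mul1r.
have [J _ HIJ] := HP _ hI.
have /regular_mulsetP wS := hw.
pose e : total_quot R := \pi_(total_quot R) (mkfrac x wS).
have eI : forall q, qideal (ideal_gen [:: x; y]) q -> qideal (ideal_gen [:: x; y]) (e * q).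
  move=> _ [_ /ideal_gen2P [u [v ->]] ->]; exists (u * x).
    by apply/ideal_gen2P; exists u, 0; rewrite mul0r addr0.
  rewrite /e /locmap loc_piM; apply: pi_eq => /=.
  have -> : x * (u * x + v * y) * 1 = u * x * x + v * (x * y) by ring.
  have -> : u * x * ((x + y) * 1) = u * x * x + u * (x * y) by ring.
  by rewrite hxy !mulr0 !addr0.
have : submod_mul (qideal (ideal_gen [:: x; y])) J (e * 1).
  by apply/(submod_mul_scale eI)/HIJ; exists 1; rewrite rmorph1.
rewrite mulr1 => /HIJ [d]; rewrite /e /locmap => /loc_pi_eqP /= [u /regular_mulsetP uS].
by move=> /uS /eqP; rewrite subr_eq0 !mulr1 => /eqP hx; exists d.
Qed.

Section P5Retract.
Variables (R S : comNzRingType) (pi : {rmorphism R -> S}) (de : {rmorphism S -> R}).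
Hypothesis deK : cancel de pi.
Hypothesis pi_regular : forall x, regular x -> regular (pi x).
Hypothesis de_regular : forall x, regular x -> regular (de x).

Let pi_mulset s : s \in regular_mulset R -> pi s \in regular_mulset S.
Proof. by move=> /regular_mulsetP /pi_regular /regular_mulsetP. Qed.
Local Notation E := (locF pi_mulset).
Local Notation iR := (locmap (regular_mulset R)).
Local Notation iS := (locmap (regular_mulset S)).

Lemma locF_locmap_de r : E (iR (de r)) = iS r.
Proof. by rewrite locF_locmap deK. Qed.

Lemma fractional_ideal_locF J : fractional_ideal J ->
  fractional_ideal (fun q => exists2 p, J p & q = E p).
Proof.
case=> J0 JD JM [d rd hd]; split.
- by exists 0 => //; rewrite rmorph0.
- by move=> _ _ [x Jx ->] [y Jy ->]; exists (x + y); [apply: JD|rewrite rmorphD].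
- move=> r _ [x Jx ->]; exists (iR (de r) * x); first exact: JM.
  by rewrite rmorphM /= locF_locmap_de.
- exists (pi d); first exact: pi_regular.
  move=> _ [q Jq ->]; have [r' hr'] := hd q Jq.
  by exists (pi r'); rewrite -(locF_locmap pi_mulset) -rmorphM /= hr' locF_locmap.
Qed.

Lemma P5_retract : P5 R -> P5 S.
Proof.
move=> HP s [z Iz rz].
have deI : regular_ideal (ideal_gen (map de s)).
  by exists (de z); [exact: ideal_gen_map|exact: de_regular].
have [J HJ HIJ] := HP _ deI.
exists (fun q => exists2 p, J p & q = E p); first exact: fractional_ideal_locF.
move=> w; split.
- have liftI q : qideal (ideal_gen s) q ->
      exists2 p, qideal (ideal_gen (map de s)) p & q = E p.
    case=> t It ->; exists (iR (de t)); last by rewrite locF_locmap_de.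
    by exists (de t); first exact: ideal_gen_map.
  have liftJ q : (exists2 p, J p & q = E p) -> exists2 p, J p & q = E p by [].
  case/(submod_mul_lift liftI liftJ) => w' /HIJ [r' ->] ->.
  by exists (pi r'); apply: locF_locmap.
- case=> r ->; rewrite -locF_locmap_de.
  apply: (submod_mul_map (rmorphD _) (rmorphM _) (rmorph0 _) _ _ ((HIJ _).2 _)).
  + move=> _ [t It ->]; exists (pi t); last exact: locF_locmap.
    by rewrite -(mapK deK s); apply: ideal_gen_map.
  + by move=> q Jq; exists q.
  + by exists (de r).
Qed.

End P5Retract.

Lemma prime_ideal_cancel (R : comNzRingType) (P : R -> Prop) w t v :
  is_prime_ideal P -> ~ P w -> regular t -> w * v * t = 0 -> P v.
Proof.
move=> HP nw ht /(regular_mull0 ht) wv0; apply: (prime_ideal_mulr HP _ nw).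
by rewrite wv0; case: HP => -[].
Qed.

Section MaximalRetract.
Variables (R S : comNzRingType) (f : {rmorphism R -> S}) (g : {rmorphism S -> R}).
Hypothesis gK : cancel g f.

Lemma preim_maximal (M : S -> Prop) : is_maximal_ideal M ->
  is_maximal_ideal (fun z => M (f z)).
Proof.
case=> HM M1 Mmax; split; [exact: preim_ideal| by rewrite rmorph1|].
move=> J [J0 JD JM] MJ.
pose fJ t := exists2 z, J z & f z = t.
have HfJ : is_ideal fJ.
  split.
  - by exists 0; rewrite ?rmorph0.
  - by move=> _ _ [z Jz <-] [w Jw <-]; exists (z + w); [apply: JD|rewrite rmorphD].
  - by move=> r _ [z Jz <-]; exists (g r * z); [apply: JM|rewrite rmorphM gK].
have MfJ x : M x -> fJ x by move=> Mx; exists (g x); [apply: MJ; rewrite gK|apply: gK].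
case: (Mmax fJ HfJ MfJ) => [fJM|[z Jz z1]]; [left|right].
  by move=> z Jz; apply: fJM; exists z.
have -> : 1 = z + (1 - z) by rewrite addrC subrK.
apply: JD => //; apply: MJ; rewrite rmorphB rmorph1 z1 subrr.
by case: HM.
Qed.

Lemma section_maximal (m : R -> Prop) : is_maximal_ideal m ->
  (forall z, m z <-> m (g (f z))) -> is_maximal_ideal (fun x => m (g x)).
Proof.
move=> Hm hm; have [HP P1 _] := preim_prime g (maximal_prime Hm).
have [_ _ mmax] := Hm; split => // J HJ PJ.
have mJ z : m z -> J (f z) by move/hm/PJ.
case: (mmax _ (preim_ideal f HJ) mJ) => [Jm|J1]; [left|right].
  by move=> x Jx; apply: Jm; rewrite gK.
by rewrite rmorph1 in J1.
Qed.

End MaximalRetract.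

Section PolyContent.
Variable R : comNzRingType.
Implicit Types g h : {poly R}.

Lemma content_coef g i : content g g`_i.
Proof.
case: (ltnP i (size g)) => h; first exact: ideal_gen_nth.
by rewrite nth_default //; case: (ideal_gen_ideal (polyseq g)).
Qed.

Lemma content_sum g n (c : nat -> R) : content g (\sum_(i < n) c i * g`_i).
Proof.
apply: (ideal_sum (F := fun i => c i * g`_i)) => [|i _]; first exact: ideal_gen_ideal.
by case: (ideal_gen_ideal (polyseq g)) => _ _ IM; apply/IM/content_coef.
Qed.

Lemma content_mulCX (c z : R) : content (c%:P * 'X) z -> exists d, z = d * c.
Proof.
apply: (ideal_gen_min (J := fun z => exists d, z = d * c)) => [|i _].
  split; first by exists 0; rewrite mul0r.
  - by move=> _ _ [u ->] [v ->]; exists (u + v); rewrite mulrDl.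
  - by move=> r _ [u ->]; exists (r * u); rewrite mulrA.
rewrite coefMX coefC; case: i => [|[|i]] /=.
- by exists 0; rewrite mul0r.
- by exists 1; rewrite mul1r.
- by exists 0; rewrite mul0r.
Qed.

Lemma ideal_gen_mul_coef g h j k : ideal_gen_mul g h (g`_j * h`_k).
Proof.
have I0 := ideal_gen_ideal [seq x * y | x <- (g : seq R), y <- (h : seq R)].
case: (ltnP j (size g)) => hj; last by rewrite (nth_default 0 hj) mul0r; case: I0.
case: (ltnP k (size h)) => hk; last by rewrite (nth_default 0 hk) mulr0; case: I0.
by apply: ideal_gen_mem; apply: allpairs_f; apply: mem_nth.
Qed.

Lemma content_mul_sub g h z : content (g * h) z -> ideal_gen_mul g h z.
Proof.
apply: ideal_gen_min; first exact: ideal_gen_ideal.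
move=> i _; rewrite coefM.
apply: (ideal_sum (F := fun j => g`_j * h`_(i - j))) => [|j _]; first exact: ideal_gen_ideal.
exact: ideal_gen_mul_coef.
Qed.

Lemma ideal_gen_mul_sub g h :
  (forall j k, content (g * h) (g`_j * h`_k)) ->
  forall z, ideal_gen_mul g h z -> content (g * h) z.
Proof.
move=> H; apply: ideal_gen_min; first exact: ideal_gen_ideal.
move=> i hi; have /allpairsP [[x y] [/= xg yh ->]] := mem_nth 0 hi.
by rewrite -(nth_index 0 xg) -(nth_index 0 yh).
Qed.

End PolyContent.

Section IdealModule.
Variables (R : comNzRingType) (I : ideal R).

Definition ideal_pred : {pred R^o} := fun x => `[< I x >].

Lemma ideal_pred_submod_closed : subsemimod_closed ideal_pred.
Proof.
have [I0 ID IM] := ideal_is_ideal I; split; first split.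
- by rewrite unfold_in; apply/asboolP.
- by move=> u v; rewrite !unfold_in => /asboolP Iu /asboolP Iv; apply/asboolP/ID.
- by move=> r u; rewrite !unfold_in => /asboolP Iu; apply/asboolP/IM.
Qed.

Record imod := IMod { imod_val : R^o; imod_valP : imod_val \in ideal_pred }.
HB.instance Definition _ := [isSub for imod_val].
HB.instance Definition _ := [Choice of imod by <:].
HB.instance Definition _ := GRing.SubChoice_isSubLmodule.Build R R^o ideal_pred imod
  ideal_pred_submod_closed.

Lemma ideal_predP x : I x -> x \in ideal_pred.
Proof. by move=> Ix; rewrite unfold_in; apply/asboolP. Qed.

Lemma imod_valI (n : imod) : I (imod_val n).
Proof. by have := imod_valP n; rewrite unfold_in => /asboolP. Qed.

End IdealModule.

Section DualBasis2.
Variables (R : comNzRingType) (x y : R).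
Let I2 : ideal R := Ideal (ideal_gen_ideal [:: x; y]).
Local Notation I := (ideal_gen [:: x; y]).

Lemma comb2_in (m : (R^o * R^o)%type) : (m.1 * x + m.2 * y) \in ideal_pred I2.
Proof. by apply: ideal_predP; apply/ideal_gen2P; exists m.1, m.2. Qed.

Definition comb2 (m : (R^o * R^o)%type) : imod I2 := IMod (comb2_in m).

Lemma comb2_is_linear : linear comb2.
Proof.
move=> r m1 m2; apply: val_inj => /=.
change ((r * m1.1 + m2.1) * x + (r * m1.2 + m2.2) * y =
  r * (m1.1 * x + m1.2 * y) + (m2.1 * x + m2.2 * y)); ring.
Qed.

HB.instance Definition _ :=
  GRing.isLinear.Build R (R^o * R^o)%type (imod I2) _ comb2 comb2_is_linear.

(* The value [0] outside [I] is arbitrary: only the restriction to [I] is used. *)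
Definition incl2 (z : R) : imod I2 :=
  match pselect (I z) with
  | left Iz => IMod (@ideal_predP _ I2 z Iz)
  | right _ => 0
  end.

Lemma incl2E z (Iz : I z) : incl2 z = IMod (@ideal_predP _ I2 z Iz).
Proof. by rewrite /incl2; case: pselect => [Iz'|//]; apply: val_inj. Qed.

Lemma P1_dual_basis2 : P1 R -> exists phi psi : R -> R,
  [/\ @linear_on R R^o I phi, @linear_on R R^o I psi &
      forall z, I z -> z = phi z * x + psi z * y].
Proof.
move=> HP.
have comb2_surj (n : imod I2) : exists m, comb2 m = n.
  have /ideal_gen2P [u [v e]] := imod_valI n.
  by exists (u : R^o, v : R^o); apply: val_inj => /=; rewrite e.
have [ID IM] : (forall z w, I z -> I w -> I (z + w)) /\ (forall r z, I z -> I (r * z)).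
  by case: (ideal_gen_ideal [:: x; y]).
have incl2_lin : @linear_on R (imod I2) I incl2.
  split=> [z w Iz Iw|r z Iz].
  - by have Izw := ID z w Iz Iw; rewrite !incl2E; apply: val_inj.
  - by have Irz := IM r z Iz; rewrite !incl2E; apply: val_inj.
have [k [[kD kZ] comb2k]] := HP [:: x; y] _ _ comb2 comb2_surj incl2 incl2_lin.
exists (fun z => (k z).1), (fun z => (k z).2); split.
- by split=> [z w Iz Iw|r z Iz]; rewrite ?kD ?kZ.
- by split=> [z w Iz Iw|r z Iz]; rewrite ?kD ?kZ.
- by move=> z Iz; have := comb2k z Iz; rewrite incl2E => /(congr1 val) /= ->.
Qed.

End DualBasis2.

Definition separates (R : comNzRingType) (x y d : R) :=
  d * (x * x) = x * x /\ d * (y * y) = 0.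

Section Separates.
Variables (R : comNzRingType) (x y : R).
Hypothesis xy0 : x * y = 0.

Lemma separates_of_dvd d : d * (x + y) = x -> separates x y d.
Proof.
move=> e; split.
  have : x * x = d * (x * x) + d * (x * y) by rewrite -{1}e; ring.
  by rewrite xy0 mulr0 addr0 => /esym.
have -> : d * (y * y) = d * (x + y) * y - d * (x * y) by ring.
by rewrite e xy0 mulr0 subr0.
Qed.

Lemma separates_of_principal : principal (ideal_gen [:: x; y]) -> exists d, separates x y d.
Proof.
case=> g hg.
have [c1 hx] : exists c, x = c * g.
  by apply/hg/ideal_gen2P; exists 1, 0; rewrite mul1r mul0r addr0.
have [c2 hy] : exists c, y = c * g.
  by apply/hg/ideal_gen2P; exists 0, 1; rewrite mul1r mul0r add0r.
have [f0 [f1 hxy]] : exists f0 f1, g = f0 * x + f1 * y.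
  by apply/ideal_gen2P/hg; exists 1; rewrite mul1r.
exists (c1 * f0); split.
  have : x * x = c1 * f0 * (x * x) + c1 * f1 * (x * y) by rewrite {1}hx hxy; ring.
  by rewrite xy0 mulr0 addr0 => /esym.
have -> : c1 * f0 * (y * y) = f0 * c2 * (y * (c1 * g)) by rewrite {2}hy; ring.
by rewrite -hx [y * x]mulrC xy0 mulr0.
Qed.

End Separates.

Definition resmod (R S : comNzRingType) (f : {rmorphism S -> R}) (M : lmodType R) : Type := M.

Section RestrictionOfScalars.
Variables (R S : comNzRingType) (f : {rmorphism S -> R}) (M : lmodType R).
Local Notation RM := (resmod f M).
HB.instance Definition _ := GRing.Zmodule.on RM.

Definition resscale (s : S) (m : RM) : RM := f s *: (m : M).

Lemma resscaleA x y (v : RM) : resscale x (resscale y v) = resscale (x * y) v.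
Proof. by rewrite /resscale scalerA rmorphM. Qed.
Lemma resscale1 : left_id 1 resscale.
Proof. by move=> v; rewrite /resscale rmorph1 scale1r. Qed.
Lemma resscaleDr : right_distributive resscale +%R.
Proof. by move=> x u v; rewrite /resscale scalerDr. Qed.
Lemma resscaleDl (v : RM) : {morph resscale^~ v : x y / x + y}.
Proof. by move=> x y; rewrite /resscale rmorphD scalerDl. Qed.

HB.instance Definition _ := GRing.Zmodule_isLmodule.Build S RM
  resscaleA resscale1 resscaleDr resscaleDl.

End RestrictionOfScalars.

Section RestrictionOfLinear.
Variables (R S : comNzRingType) (f : {rmorphism S -> R}) (M N : lmodType R).
Variable (g : {linear M -> N}).

Definition resfun (m : resmod f M) : resmod f N := g m.

Lemma resfun_is_linear : linear resfun.
Proof. by move=> x u v; apply: (linearP g (f x) u v). Qed.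

HB.instance Definition _ :=
  GRing.isLinear.Build S (resmod f M) (resmod f N) *:%R resfun resfun_is_linear.

Definition resfunL : {linear resmod f M -> resmod f N} :=
  GRing.Linear.clone S (resmod f M) (resmod f N) *:%R resfun _.

End RestrictionOfLinear.

Section RingRetract.
Variables (R S : comNzRingType) (f : {rmorphism S -> R}) (g : {rmorphism R -> S}).
Hypothesis gK : cancel g f.

Lemma ideal_gen_retract (s : seq R) z : ideal_gen (map g s) z -> ideal_gen s (f z).
Proof. by move/(ideal_gen_map f); rewrite mapK. Qed.

(* A lifting problem over [R] becomes one over [S] by restricting scalars along [f]. *)
Lemma P1_retract : P1 S -> P1 R.
Proof.
move=> HS s M N h hsurj k [kD kZ].
pose k' (z : S) : resmod f N := k (f z).
have k'lin : @linear_on S (resmod f N) (ideal_gen (map g s)) k'.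
  split=> [z w Iz Iw|r z Iz]; rewrite /k' ?rmorphD ?rmorphM.
    by apply: kD; apply: ideal_gen_retract.
  by apply: kZ; apply: ideal_gen_retract.
have [l [[lD lZ] hl]] := HS (map g s) _ _ (resfunL f h) hsurj k' k'lin.
exists (fun x => (l (g x) : M)); split; first split.
- by move=> x y Ix Iy; rewrite rmorphD; apply: lD; apply: ideal_gen_map.
- move=> r x Ix; rewrite rmorphM lZ; last exact: ideal_gen_map.
  by rewrite -{2}(gK r).
- by move=> x Ix; have := hl _ (ideal_gen_map g Ix); rewrite /k' gK.
Qed.

Lemma content_map_poly (P : {poly S}) z : content P z -> content (map_poly f P) (f z).
Proof.
case=> c ->; rewrite rmorph_sum.
under eq_bigr => i _ do rewrite rmorphM -coef_map.
exact: (content_sum _ _ (fun i => f (c i))).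
Qed.

Lemma P4_retract : P4 S -> P4 R.
Proof.
move=> HS p q z; split; first exact: content_mul_sub.
apply: ideal_gen_mul_sub => j k.
have : content (map_poly g p * map_poly g q) (g (p`_j * q`_k)).
  by apply/HS; rewrite rmorphM -!coef_map; apply: ideal_gen_mul_coef.
rewrite -rmorphM => /content_map_poly; rewrite gK -map_poly_comp map_poly_id //.
by move=> x _ /=; rewrite gK.
Qed.

End RingRetract.

Section Duplication.
Variables (A : comNzRingType) (a : ideal A).
Local Notation D := (dup a).
Let Ha : is_ideal a := ideal_is_ideal a.

Definition dfst (z : D) : A := (val z).1.
Definition dsnd (z : D) : A := (val z).2.

Lemma dfst_is_zmod_morphism : zmod_morphism dfst.
Proof. by move=> x y; rewrite /dfst rmorphB. Qed.
Lemma dfst_is_monoid_morphism : monoid_morphism dfst.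
Proof. by split=> [|x y]; rewrite /dfst ?rmorph1 ?rmorphM. Qed.
HB.instance Definition _ := GRing.isZmodMorphism.Build _ _ dfst dfst_is_zmod_morphism.
HB.instance Definition _ := GRing.isMonoidMorphism.Build _ _ dfst dfst_is_monoid_morphism.

Lemma dsnd_is_zmod_morphism : zmod_morphism dsnd.
Proof. by move=> x y; rewrite /dsnd rmorphB. Qed.
Lemma dsnd_is_monoid_morphism : monoid_morphism dsnd.
Proof. by split=> [|x y]; rewrite /dsnd ?rmorph1 ?rmorphM. Qed.
HB.instance Definition _ := GRing.isZmodMorphism.Build _ _ dsnd dsnd_is_zmod_morphism.
HB.instance Definition _ := GRing.isMonoidMorphism.Build _ _ dsnd dsnd_is_monoid_morphism.

Lemma dup_eq (z w : D) : dfst z = dfst w -> dsnd z = dsnd w -> z = w.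
Proof.
move=> h1 h2; apply: val_inj.
by rewrite [val z]surjective_pairing [val w]surjective_pairing -/(dfst z) -/(dsnd z) h1 h2.
Qed.

Lemma dup_diff (z : D) : a (dsnd z - dfst z).
Proof. by have := dup_valP z; rewrite unfold_in => /asboolP. Qed.

Definition dpair (x y : A) (h : a (y - x)) : D :=
  Dup (introT (asboolP _) h : (x, y) \in dup_pred a).

Lemma dup_diag_diff (x : A) : a (x - x).
Proof. by rewrite subrr; case: Ha. Qed.

Definition ddiag (x : A) : D := dpair (dup_diag_diff x).

Lemma ddiagK : cancel ddiag dfst. Proof. by []. Qed.

Lemma ddiag_is_zmod_morphism : zmod_morphism ddiag.
Proof. by move=> x y; apply: dup_eq; rewrite !rmorphB. Qed.
Lemma ddiag_is_monoid_morphism : monoid_morphism ddiag.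
Proof. by split=> [|x y]; apply: dup_eq; rewrite ?rmorph1 ?rmorphM. Qed.
HB.instance Definition _ := GRing.isZmodMorphism.Build _ _ ddiag ddiag_is_zmod_morphism.
HB.instance Definition _ := GRing.isMonoidMorphism.Build _ _ ddiag ddiag_is_monoid_morphism.

Lemma regular_ddiag r : regular r -> regular (ddiag r).
Proof.
move=> hr z hz; apply: dup_eq; rewrite rmorph0.
  by have := congr1 dfst hz; rewrite rmorphM rmorph0 => /hr.
by have := congr1 dsnd hz; rewrite rmorphM rmorph0 => /hr.
Qed.

Section RegularWitness.
Variables (r : A) (ar : a r) (hr : regular r).

Let dupX_diff : a (0 - r). Proof. by rewrite sub0r; apply: idealN. Qed.
Let dupY_diff : a (r - 0). Proof. by rewrite subr0. Qed.

Definition dupX : D := dpair dupX_diff.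
Definition dupY : D := dpair dupY_diff.

Lemma dupXY0 : dupX * dupY = 0.
Proof. by apply: dup_eq; rewrite rmorphM rmorph0 /= ?mulr0 ?mul0r. Qed.

Lemma dupXD : dupX + dupY = ddiag r.
Proof. by apply: dup_eq; rewrite rmorphD /= ?addr0 ?add0r. Qed.

Lemma dup_separates_full d : separates dupX dupY d -> forall x, a x.
Proof.
case=> /(congr1 dfst) hX /(congr1 dsnd) hY; rewrite !rmorphM /= in hX.
rewrite !rmorphM rmorph0 /= in hY.
have hr2 := regularM hr hr.
have d1 : dfst d = 1.
  by apply/eqP; rewrite -subr_eq0; apply/eqP/(regular_mull0 hr2); rewrite mulrBl hX mul1r subrr.
have d2 : dsnd d = 0 by apply: (regular_mull0 hr2).
apply: (ideal1_all Ha); rewrite -[1]opprK; apply: idealN => //.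
by have := dup_diff d; rewrite d1 d2 sub0r.
Qed.

Lemma P5_dup_full : P5 D -> forall x, a x.
Proof.
move=> HP; have hreg : regular (dupX + dupY) by rewrite dupXD; apply: regular_ddiag.
have [d hd] := P5_orthogonal_dvd HP dupXY0 hreg.
exact: (dup_separates_full (separates_of_dvd dupXY0 hd)).
Qed.

Lemma P1_dup_full : P1 D -> forall x, a x.
Proof.
move=> HP; have [phi [psi [[_ phiZ] _ phi_psi]]] := P1_dual_basis2 dupX dupY HP.
have IX : ideal_gen [:: dupX; dupY] dupX.
  by apply/ideal_gen2P; exists 1, 0; rewrite mul1r mul0r addr0.
have phi0 : phi 0 = 0 by have := phiZ 0 dupX IX; rewrite mul0r => ->; apply: mul0r.
have phiY : phi dupX * dupY = 0.
  by have := phiZ dupY dupX IX; rewrite mulrC dupXY0 phi0 mulrC => /esym.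
apply: (@dup_separates_full (phi dupX)); split.
  have : dupX * dupX = phi dupX * (dupX * dupX) + psi dupX * (dupX * dupY).
    by rewrite {1}(phi_psi dupX IX); ring.
  by rewrite dupXY0 mulr0 addr0 => /esym.
by rewrite mulrA phiY mul0r.
Qed.

(* With [G = X + Y T] and [H = Y + X T] one has [G H = (X^2 + Y^2) T] since
   [X Y = 0], so Gauss's identity puts [X^2 = G_0 H_1] in the principal ideal
   [(X^2 + Y^2)]. *)
Lemma P4_dup_full : P4 D -> forall x, a x.
Proof.
move=> HP.
pose G : {poly D} := dupX%:P + dupY%:P * 'X.
pose H : {poly D} := dupY%:P + dupX%:P * 'X.
have GH : G * H = (dupX * dupX + dupY * dupY)%:P * 'X.
  have XY : dupX%:P * dupY%:P = 0 :> {poly D} by rewrite -polyCM dupXY0.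
  rewrite /G /H polyCD !polyCM.
  transitivity (dupX%:P * dupY%:P * (1 + 'X^2) + (dupX%:P * dupX%:P + dupY%:P * dupY%:P) * 'X).
    by rewrite expr2; ring.
  by rewrite XY mul0r add0r.
have := ideal_gen_mul_coef G H 0 1.
rewrite coefD coefC coefMX /= addr0 coefD coefC coefMX /= add0r coefC /=.
move=> /(HP G H _).2; rewrite GH => /content_mulCX [c hc].
have h1 : dfst c * (r * r) = r * r.
  by have := congr1 dfst hc; rewrite !(rmorphM, rmorphD) /= mul0r addr0 => /esym.
have h2 : dsnd c * (r * r) = 0.
  by have := congr1 dsnd hc; rewrite !(rmorphM, rmorphD) /= mul0r add0r => /esym.
by apply: (@dup_separates_full c); split; apply: dup_eq;
  rewrite !rmorphM ?rmorph0 /= ?h1 ?h2 ?mulr0.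
Qed.

Section AtMaximalAbove.
Variables (M : A -> Prop) (HM : is_maximal_ideal M) (aM : forall x, a x -> M x).
Let HMp : is_prime_ideal M := maximal_prime HM.
Let HMi : is_ideal M := let: And3 h _ _ := HM in h.
Let Hm : is_maximal_ideal (fun z : D => M (dfst z)) := preim_maximal ddiagK HM.
Local Notation S := (max_mulset Hm).
Local Notation iM := (locmap S).

Lemma dup_maximal_snd_fst (z : D) : M (dsnd z) <-> M (dfst z).
Proof.
have Mdiff := aM (dup_diff z); have [_ MD _] := HMi; split=> Mz.
  have -> : dfst z = dsnd z - (dsnd z - dfst z) by ring.
  exact: idealB.
have -> : dsnd z = dfst z + (dsnd z - dfst z) by ring.
exact: MD.
Qed.

Lemma dup_max_mulset_fst s : s \in S -> ~ M (dfst s).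
Proof. by move/prime_mulsetP. Qed.

Lemma dup_max_mulset_snd s : s \in S -> ~ M (dsnd s).
Proof. by move=> /dup_max_mulset_fst nM /dup_maximal_snd_fst. Qed.

Lemma dup_local_not_separates d : ~ separates (iM dupX) (iM dupY) d.
Proof.
have [x ->] := loc_pi_surj d; have sS := valP x.
rewrite /separates -!rmorphM /locmap !loc_piM.
case=> /loc_pi_eqP [u uS /= hX] /loc_pi_eq0P [v vS /= hY].
set p := (val x).1 in hX hY; set s := (val x).2 in hX sS.
have Mps : M (dfst p - dfst s).
  have e : dfst u * (dfst p * (r * r) * 1 - r * r * (dfst s * 1)) = 0.
    by move: (congr1 dfst hX); rewrite !(rmorphM, rmorphB, rmorph1) rmorph0.
  apply: (prime_ideal_cancel HMp (dup_max_mulset_fst uS) (regularM hr hr)).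
  by rewrite -[RHS]e; ring.
have Mp2 : M (dsnd p).
  have e : dsnd v * (dsnd p * (r * r)) = 0.
    by move: (congr1 dsnd hY); rewrite !rmorphM rmorph0.
  apply: (prime_ideal_cancel HMp (dup_max_mulset_snd vS) (regularM hr hr)).
  by rewrite -[RHS]e; ring.
apply: (dup_max_mulset_fst sS).
have -> : dfst s = dfst p - (dfst p - dfst s) by ring.
by apply: idealB => //; apply/dup_maximal_snd_fst.
Qed.

Lemma not_P2_dup : P2 D -> False.
Proof.
move=> HP; have [dom _] := HP _ (maximal_prime Hm).
have : iM dupX * iM dupY = 0 by rewrite -rmorphM dupXY0 rmorph0.
case/dom => [X0|Y0].
  by apply: (@dup_local_not_separates 0); rewrite /separates X0 !mul0r.
by apply: (@dup_local_not_separates 1); rewrite /separates Y0 !mul1r mulr0.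
Qed.

Lemma not_P3_dup : P3 D -> False.
Proof.
move=> HP; have iXY0 : iM dupX * iM dupY = 0 by rewrite -rmorphM dupXY0 rmorph0.
have [d] := separates_of_principal iXY0 (HP [:: dupX; dupY] _ Hm).
exact: dup_local_not_separates.
Qed.

Lemma not_locally_prufer_dup : locally_prufer D -> False.
Proof.
move=> HLP; have iXY0 : iM dupX * iM dupY = 0 by rewrite -rmorphM dupXY0 rmorph0.
have hreg : regular (iM dupX + iM dupY).
  by rewrite -rmorphD dupXD; apply/regular_locmap/regular_ddiag.
have [d hd] := P5_orthogonal_dvd (HLP _ Hm) iXY0 hreg.
exact: (@dup_local_not_separates d (separates_of_dvd iXY0 hd)).
Qed.

End AtMaximalAbove.

Lemma P2_dup_full : P2 D -> forall x, a x.
Proof. by move=> HP; apply: (full_of_no_maximal_above Ha) => M HM aM; exact: not_P2_dup HM aM HP. Qed.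

Lemma P3_dup_full : P3 D -> forall x, a x.
Proof. by move=> HP; apply: (full_of_no_maximal_above Ha) => M HM aM; exact: not_P3_dup HM aM HP. Qed.

Lemma locally_prufer_dup_full : locally_prufer D -> forall x, a x.
Proof.
move=> HP; apply: (full_of_no_maximal_above Ha) => M HM aM.
exact: not_locally_prufer_dup HM aM HP.
Qed.

End RegularWitness.

Section FullDuplication.
Hypothesis full : forall x, a x.

Definition dmk (x y : A) : D := dpair (full (y - x)).

Lemma regular_dmk x y : regular x -> regular y -> regular (dmk x y).
Proof.
move=> hx hy z e; apply: dup_eq; rewrite rmorph0.
  by apply: hx; have := congr1 dfst e; rewrite rmorphM rmorph0.
by apply: hy; have := congr1 dsnd e; rewrite rmorphM rmorph0.
Qed.

Definition dproj (b : bool) (z : D) : A := if b then dfst z else dsnd z.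
Definition didem (b : bool) : D := if b then dmk 1 0 else dmk 0 1.
Arguments didem : simpl never.

Lemma didem_sum : didem true + didem false = 1.
Proof. by apply: dup_eq; rewrite /didem rmorphD rmorph1 /= ?addr0 ?add0r. Qed.

Lemma didem_orth : didem true * didem false = 0.
Proof. by apply: dup_eq; rewrite /didem rmorphM rmorph0 /= ?mulr0 ?mul0r. Qed.

Section Projection.
Variable b : bool.

Lemma dproj_is_zmod_morphism : zmod_morphism (dproj b).
Proof. by move=> x y; rewrite /dproj; case: b; rewrite rmorphB. Qed.
Lemma dproj_is_monoid_morphism : monoid_morphism (dproj b).
Proof. by rewrite /dproj; split=> [|x y]; case: b; rewrite ?rmorph1 ?rmorphM. Qed.
HB.instance Definition _ := GRing.isZmodMorphism.Build _ _ (dproj b)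
  dproj_is_zmod_morphism.
HB.instance Definition _ := GRing.isMonoidMorphism.Build _ _ (dproj b)
  dproj_is_monoid_morphism.

Lemma ddiagK_dproj : cancel ddiag (dproj b).
Proof. by rewrite /dproj; case: b. Qed.

Lemma dproj_didem : dproj b (didem b) = 1.
Proof. by rewrite /dproj /didem; case: b. Qed.

Lemma didem_idem : didem b * didem b = didem b.
Proof. by apply: dup_eq; rewrite rmorphM /didem; case: b; rewrite /= ?mulr1 ?mulr0. Qed.

Lemma didem_ddiag z : ddiag (dproj b z) * didem b = didem b * z.
Proof.
apply: dup_eq; rewrite !rmorphM /dproj /didem;
  by case: b; rewrite /= ?mulr1 ?mul1r ?mulr0 ?mul0r.
Qed.

Lemma didem_dproj0 z : dproj b z = 0 -> didem b * z = 0.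
Proof. by move=> h; rewrite -didem_ddiag h rmorph0 mul0r. Qed.

Lemma didemC_dproj0 z : dproj b z = 0 -> didem (~~ b) * z = z.
Proof.
rewrite /dproj /didem; case: b => h; apply: dup_eq; rewrite rmorphM /=;
  by rewrite /= ?h ?mul1r ?mul0r.
Qed.

Lemma regular_dproj z : regular z -> regular (dproj b z).
Proof.
rewrite /dproj; case: b => hz y e.
- have h : z * dmk y 0 = 0 by apply: dup_eq; rewrite rmorphM rmorph0 /= ?mulr0.
  by have := congr1 dfst (hz _ h); rewrite rmorph0.
- have h : z * dmk 0 y = 0 by apply: dup_eq; rewrite rmorphM rmorph0 /= ?mulr0.
  by have := congr1 dsnd (hz _ h); rewrite rmorph0.
Qed.

End Projection.

Lemma dup_ideal_split b (m : D -> Prop) : is_ideal m -> m (didem (~~ b)) ->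
  forall z, m z <-> m (ddiag (dproj b z)).
Proof.
move=> mI mb z; have [_ mD _] := mI.
have hw : m (z - ddiag (dproj b z)).
  rewrite -(@didemC_dproj0 b (z - ddiag (dproj b z))); first exact: idealMr.
  by rewrite rmorphB /= ddiagK_dproj subrr.
split=> h.
- have -> : ddiag (dproj b z) = z - (z - ddiag (dproj b z)) by ring.
  exact: idealB.
- have -> : z = ddiag (dproj b z) + (z - ddiag (dproj b z)) by ring.
  exact: mD.
Qed.

Lemma dup_prime_split (m : D -> Prop) : is_prime_ideal m ->
  exists b, forall z, m z <-> m (ddiag (dproj b z)).
Proof.
case=> mI _ mM; have : m (didem true * didem false) by rewrite didem_orth; case: mI.
by case/mM => h; [exists false|exists true]; apply: dup_ideal_split.
Qed.

Section LocalIso.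
Variables (b : bool) (m : D -> Prop) (Hm : is_prime_ideal m).
Variables (P : A -> Prop) (HP : is_prime_ideal P).
Hypothesis mP : forall z, m z <-> P (dproj b z).
Local Notation iD := (locmap (prime_mulset Hm)).
Local Notation iA := (locmap (prime_mulset HP)).

Lemma dproj_prime_mulset s : s \in prime_mulset Hm -> dproj b s \in prime_mulset HP.
Proof. by move=> /prime_mulsetP h; apply/prime_mulsetP => /mP. Qed.

Lemma ddiag_prime_mulset t : t \in prime_mulset HP -> ddiag t \in prime_mulset Hm.
Proof. by move=> /prime_mulsetP h; apply/prime_mulsetP => /mP; rewrite ddiagK_dproj. Qed.

Definition loc_dproj := locF dproj_prime_mulset.
Definition loc_ddiag := locF ddiag_prime_mulset.

Lemma loc_ddiagK : cancel loc_ddiag loc_dproj.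
Proof.
move=> q; have [x ->] := loc_pi_surj q; rewrite /loc_dproj /loc_ddiag !locF_pi.
by apply: pi_eq => /=; rewrite !ddiagK_dproj.
Qed.

(* [didem b] lies outside [m] and identifies [z] with [ddiag (dproj b z)]. *)
Lemma loc_dprojK : cancel loc_dproj loc_ddiag.
Proof.
move=> q; have [x ->] := loc_pi_surj q; rewrite /loc_dproj /loc_ddiag !locF_pi.
apply/loc_pi_eqP; exists (didem b).
  by apply/prime_mulsetP => /mP; rewrite dproj_didem; case: HP.
by apply: didem_dproj0 => /=; rewrite !(rmorphB, rmorphM) /= !ddiagK_dproj; ring.
Qed.

Lemma loc_dup_valuation_domain :
  valuation_domain (loc (prime_mulset Hm)) <-> valuation_domain (loc (prime_mulset HP)).
Proof.
by split; apply: valuation_domain_retract; [apply: loc_ddiagK|apply: loc_dprojK].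
Qed.

Lemma loc_dup_P5 : P5 (loc (prime_mulset Hm)) <-> P5 (loc (prime_mulset HP)).
Proof.
have reg_dproj := rmorph_iso_regular loc_dprojK loc_ddiagK.
have reg_ddiag := rmorph_iso_regular loc_ddiagK loc_dprojK.
split; [exact: (P5_retract loc_ddiagK reg_dproj reg_ddiag)|
  exact: (P5_retract loc_dprojK reg_ddiag reg_dproj)].
Qed.

Lemma loc_dup_principal (s : seq D) :
  principal (ideal_gen (map iA (map (dproj b) s))) -> principal (ideal_gen (map iD s)).
Proof.
move=> h; apply: (principal_retract loc_dprojK).
suff -> : map loc_dproj (map iD s) = map iA (map (dproj b) s) by [].
by rewrite -!map_comp; apply: eq_map => z /=; apply: locF_locmap.
Qed.

Lemma loc_dup_principal_inv (s : seq A) :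
  principal (ideal_gen (map iD (map ddiag s))) -> principal (ideal_gen (map iA s)).
Proof.
move=> h; apply: (principal_retract loc_ddiagK).
suff -> : map loc_ddiag (map iA s) = map iD (map ddiag s) by [].
by rewrite -!map_comp; apply: eq_map => z /=; apply: locF_locmap.
Qed.

End LocalIso.

Lemma P2_dup : P2 A -> P2 D.
Proof.
move=> HA m Hm; have [b mb] := dup_prime_split Hm.
by apply/(@loc_dup_valuation_domain b m Hm _ (preim_prime ddiag Hm) mb)/HA.
Qed.

Lemma P2_of_dup : P2 D -> P2 A.
Proof.
move=> HD P HP; have Hm := preim_prime dfst HP.
by apply/(@loc_dup_valuation_domain true _ Hm _ HP (fun z => iff_refl _))/HD.
Qed.

Lemma P3_dup : P3 A -> P3 D.
Proof.
move=> HA s m Hm; have [b mb] := dup_prime_split (maximal_prime Hm).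
have HPm := section_maximal (ddiagK_dproj b) Hm mb.
exact: (@loc_dup_principal b _ _ _ (maximal_prime HPm) mb s (HA _ _ HPm)).
Qed.

Lemma P3_of_dup : P3 D -> P3 A.
Proof.
move=> HD s M HM; have Hm := preim_maximal ddiagK HM.
exact: (@loc_dup_principal_inv true _ (maximal_prime Hm) _ _
  (fun z => iff_refl _) s (HD _ _ Hm)).
Qed.

Lemma locally_prufer_dup : locally_prufer A -> locally_prufer D.
Proof.
move=> HA m Hm; have [b mb] := dup_prime_split (maximal_prime Hm).
have HPm := section_maximal (ddiagK_dproj b) Hm mb.
by apply/(@loc_dup_P5 b _ _ _ (maximal_prime HPm) mb)/HA.
Qed.

Lemma locally_prufer_of_dup : locally_prufer D -> locally_prufer A.
Proof.
move=> HD M HM; have Hm := preim_maximal ddiagK HM.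
by apply/(@loc_dup_P5 true _ (maximal_prime Hm) _ _ (fun z => iff_refl _))/HD.
Qed.

Lemma content_of_dproj (p : {poly D}) w :
  (forall b, content (map_poly (dproj b) p) (dproj b w)) -> content p w.
Proof.
move=> hb; have [_ CD _] := ideal_gen_ideal (polyseq p).
have -> : w = didem true * w + didem false * w by rewrite -mulrDl didem_sum mul1r.
suff hbw b : content p (didem b * w) by apply: CD; apply: hbw.
have [c hc] := hb b; rewrite -didem_ddiag hc rmorph_sum mulr_suml.
under eq_bigr => i _ do
  rewrite coef_map /= rmorphM -mulrA didem_ddiag mulrA.
exact: (content_sum _ _ (fun i => ddiag (c i) * didem b)).
Qed.

Lemma P4_dup : P4 A -> P4 D.
Proof.
move=> HA g h z; split; first exact: content_mul_sub.
apply: ideal_gen_mul_sub => j k; apply: content_of_dproj => b.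
have := ideal_gen_mul_coef (map_poly (dproj b) g) (map_poly (dproj b) h) j k.
by rewrite !coef_map /= -rmorphM => /HA; rewrite -rmorphM.
Qed.

Lemma ideal_gen_lift b (s : seq D) t :
  ideal_gen (map (dproj b) s) t -> ideal_gen s (ddiag t * didem b).
Proof.
have [I0 ID IM] := ideal_gen_ideal s.
apply: (ideal_gen_min (J := fun t => ideal_gen s (ddiag t * didem b))).
  split; first by rewrite rmorph0 mul0r.
  - by move=> x y hx hy; rewrite rmorphD mulrDl; apply: ID.
  - by move=> r x hx; rewrite rmorphM -mulrA; apply: IM.
move=> i; rewrite size_map => hi; rewrite (nth_map 0) // didem_ddiag.
by apply: IM; apply: ideal_gen_nth.
Qed.

(* A lifting problem over [D = A × A] splits into one over each factor,
   solved over [A] after restricting scalars along [ddiag]. *)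
Lemma P1_dup : P1 A -> P1 D.
Proof.
move=> HA s M N g gsurj h [hD hZ].
have lift b : exists k : A -> M,
   [/\ forall x y, ideal_gen (map (dproj b) s) x -> ideal_gen (map (dproj b) s) y ->
         k (x + y) = k x + k y,
       forall r x, ideal_gen (map (dproj b) s) x -> k (r * x) = ddiag r *: k x &
       forall x, ideal_gen (map (dproj b) s) x -> g (k x) = h (ddiag x * didem b)].
  pose hb (x : A) : resmod ddiag N := h (ddiag x * didem b).
  have hb_lin : @linear_on A (resmod ddiag N) (ideal_gen (map (dproj b) s)) hb.
    split=> [x y Ix Iy|r x Ix]; rewrite /hb.
      by rewrite rmorphD mulrDl; apply: hD; apply: ideal_gen_lift.
    by rewrite rmorphM -mulrA; apply: hZ; apply: ideal_gen_lift.
  have [k [[kD kZ] gk]] := HA (map (dproj b) s) _ _ (resfunL ddiag g) gsurj hb hb_lin.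
  by exists (fun x => (k x : M)); split.
have [k1 [k1D k1Z gk1]] := lift true; have [k2 [k2D k2Z gk2]] := lift false.
have Ib b z : ideal_gen s z -> ideal_gen (map (dproj b) s) (dproj b z).
  exact: ideal_gen_map.
exists (fun z => didem true *: k1 (dproj true z) + didem false *: k2 (dproj false z)).
split; first split.
- move=> z w Iz Iw; rewrite !rmorphD k1D ?k2D; try exact: Ib.
  by rewrite !scalerDr addrACA.
- move=> r z Iz; rewrite !rmorphM k1Z ?k2Z; try exact: Ib.
  rewrite !scalerA scalerDr !scalerA.
  rewrite (mulrC (didem true)) (mulrC (didem false)).
  by rewrite (didem_ddiag true r) (didem_ddiag false r) ![_ * r]mulrC.
- move=> z Iz; rewrite linearD !linearZ /= gk1 ?gk2; try exact: Ib.
  rewrite (didem_ddiag true z) (didem_ddiag false z) !hZ //.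
  by rewrite !scalerA !didem_idem -scalerDl didem_sum scale1r.
Qed.

Section TotalQuotient.
Local Notation iD := (locmap (regular_mulset D)).
Local Notation iA := (locmap (regular_mulset A)).

Lemma dproj_regular_mulset b s :
  s \in regular_mulset D -> dproj b s \in regular_mulset A.
Proof. by move=> /regular_mulsetP /(@regular_dproj b) /regular_mulsetP. Qed.

Lemma ddiag_regular_mulset s : s \in regular_mulset A -> ddiag s \in regular_mulset D.
Proof. by move=> /regular_mulsetP /regular_ddiag /regular_mulsetP. Qed.

Local Notation E b := (locF (dproj_regular_mulset b)).
Local Notation Ld := (locF ddiag_regular_mulset).

Lemma locF_dproj_ddiag b q : E b (Ld q) = q.
Proof.
have [x ->] := loc_pi_surj q; rewrite !locF_pi; apply: pi_eq => /=.
by rewrite !ddiagK_dproj.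
Qed.

Lemma locF_dproj_inj q q' : (forall b, E b q = E b q') -> q = q'.
Proof.
move=> hb; apply/eqP; rewrite -subr_eq0; apply/eqP.
have [x ex] := loc_pi_surj (q - q').
have h b : dproj b (val x).1 = 0.
  have : E b (q - q') = 0 by rewrite rmorphB /= hb subrr.
  by rewrite ex locF_pi => /loc_pi_eq0P [u /regular_mulsetP uS /= /uS].
rewrite ex; apply/loc_pi_eq0P; exists 1; first exact: ms1.
by rewrite mul1r; apply: dup_eq; rewrite rmorph0; [apply: (h true)|apply: (h false)].
Qed.

Definition loc_lift b (q : total_quot A) : total_quot D := Ld q * iD (didem b).

Lemma loc_liftD b : {morph loc_lift b : x y / x + y}.
Proof. by move=> x y; rewrite /loc_lift rmorphD mulrDl. Qed.

Lemma loc_liftM b : {morph loc_lift b : x y / x * y}.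
Proof.
by move=> x y; rewrite /loc_lift rmorphM mulrACA -[iD _ * iD _]rmorphM didem_idem.
Qed.

Lemma loc_lift0 b : loc_lift b 0 = 0.
Proof. by rewrite /loc_lift rmorph0 mul0r. Qed.

Lemma loc_lift_locmap b x : loc_lift b (iA x) = iD (ddiag x * didem b).
Proof. by rewrite /loc_lift locF_locmap rmorphM. Qed.

Lemma locF_dproj_lift c b q : E c (loc_lift b q) = if c == b then q else 0.
Proof.
rewrite /loc_lift rmorphM /= locF_dproj_ddiag locF_locmap.
by rewrite /didem; case: b; case: c; rewrite /= ?rmorph1 ?rmorph0 ?mulr1 ?mulr0.
Qed.

Lemma fractional_ideal_dup (J : bool -> total_quot A -> Prop) :
  (forall b, fractional_ideal (J b)) -> fractional_ideal (fun q => forall b, J b (E b q)).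
Proof.
move=> HJ; split.
- by move=> b; rewrite rmorph0; case: (HJ b).
- by move=> x y hx hy b; rewrite rmorphD; case: (HJ b) => _ JD _ _; apply: JD.
- by move=> r x hx b; rewrite rmorphM /= locF_locmap; case: (HJ b) => _ _ JM _; apply: JM.
case: (HJ true) => _ _ _ [d1 rd1 hd1]; case: (HJ false) => _ _ _ [d2 rd2 hd2].
exists (dmk d1 d2); first exact: regular_dmk.
move=> q Jq; have [r1 e1] := hd1 _ (Jq true); have [r2 e2] := hd2 _ (Jq false).
by exists (dmk r1 r2); apply: locF_dproj_inj => -[]; rewrite rmorphM /= !locF_locmap.
Qed.

Lemma P5_dup : P5 A -> P5 D.
Proof.
move=> HA s [z Iz rz].
have /choice [J HJ] : forall b, exists J, fractional_ideal J /\
    forall w, submod_mul (qideal (ideal_gen (map (dproj b) s))) J w <-> exists r, w = iA r.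
  move=> b; have [|J ? ?] := HA (map (dproj b) s); last by exists J.
  by exists (dproj b z); [apply: ideal_gen_map|apply: regular_dproj].
exists (fun q => forall b, J b (E b q)).
  by apply: fractional_ideal_dup => b; case: (HJ b).
move=> w; split.
- move=> hw; have hE b : exists r, E b w = iA r.
    apply/(proj2 (HJ b)); apply: (submod_mul_map (rmorphD _) (rmorphM _) (rmorph0 _) _ _ hw).
    + by move=> _ [t It ->]; exists (dproj b t); [apply: ideal_gen_map|apply: locF_locmap].
    + by move=> q Jq; apply: Jq.
  have [r1 e1] := hE true; have [r2 e2] := hE false.
  by exists (dmk r1 r2); apply: locF_dproj_inj => -[]; rewrite locF_locmap.
- case=> r ->.
  have -> : iD r = loc_lift true (iA (dproj true r)) + loc_lift false (iA (dproj false r)).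
    by rewrite !loc_lift_locmap -rmorphD !didem_ddiag -mulrDl didem_sum mul1r.
  have lift b : submod_mul (qideal (ideal_gen s)) (fun q => forall c, J c (E c q))
      (loc_lift b (iA (dproj b r))).
    apply: (submod_mul_map (loc_liftD b) (loc_liftM b) (loc_lift0 b) _ _
      ((proj2 (HJ b) _).2 (ex_intro _ _ erefl))).
    + move=> _ [t It ->]; rewrite loc_lift_locmap.
      by exists (ddiag t * didem b) => //; apply: ideal_gen_lift.
    + move=> q Jq c; rewrite locF_dproj_lift; case: eqP => [->|_] //.
      by case: (proj1 (HJ c)).
  exact: submod_mulD (lift true) (lift false).
Qed.

Lemma P5_of_dup : P5 D -> P5 A.
Proof. exact: (P5_retract ddiagK (@regular_dproj true) (@regular_ddiag)). Qed.

End TotalQuotient.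

End FullDuplication.

End Duplication.

Theorem corollary3p3 (A : comNzRingType) (a : ideal A) :
  regular_ideal a ->
  (forall n : nat, (1 <= n <= 5)%N ->
     (Pcond n (dup a) <-> Pcond n A /\ (forall x : A, a x))) /\
  (locally_prufer (dup a) <-> locally_prufer A /\ (forall x : A, a x)).
Proof.
case=> r ar hr.
have transfer (PD PA : Prop) : (PD -> forall x, a x) ->
    ((forall x, a x) -> PD <-> PA) -> (PD <-> PA /\ forall x, a x).
  move=> full_of PDA; split=> [HD|[HA full]]; last exact/(PDA full).
  by have full := full_of HD; split=> //; apply/(PDA full).
split; last first.
  apply: transfer (locally_prufer_dup_full ar hr) _ => full.
  by split; [apply: locally_prufer_of_dup|apply: locally_prufer_dup].
case=> [|[|[|[|[|[|n]]]]]] //= _.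
- apply: transfer (P1_dup_full ar hr) _ => full.
  by split; [apply: P1_retract (@ddiagK _ a)|apply: P1_dup].
- apply: transfer (P2_dup_full ar hr) _ => full.
  by split; [apply: P2_of_dup|apply: P2_dup].
- apply: transfer (P3_dup_full ar hr) _ => full.
  by split; [apply: P3_of_dup|apply: P3_dup].
- apply: transfer (P4_dup_full ar hr) _ => full.
  by split; [apply: P4_retract (@ddiagK _ a)|apply: P4_dup].
- apply: transfer (P5_dup_full ar hr) _ => full.
  by split; [apply: P5_of_dup|apply: P5_dup].
Qed.
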